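(* Let $\mathfrak g$ be a barrelled locally convex Lie algebra and let $(\pi,V)$ be a continuous unitary representation of $\mathfrak g$. Then the map $\mathfrak g\times V\to V$, $(\xi,\psi)\mapsto\pi(\xi)\psi$, is sequentially continuous when $V$ carries the weak topology, and also when $V$ carries the strong topology.
   Context: Barrelled: every closed, convex, circled, absorbing subset is a $0$-neighbourhood. A unitary representation $(\pi,V)$ of $\mathfrak g$: $V$ complex pre-Hilbert space (completion $\mathcal H_V$), $\pi\colon\mathfrak g\to\mathrm{End}(V)$ a Lie algebra homomorphism with skew-symmetric values. $\pi_n(\xi_n,\dots,\xi_1)=\pi(\xi_n)\cdots\pi(\xi_1)$, $\pi_0(\lambda)=\lambda\mathbf 1$ on $\mathfrak g^0=\mathbb R$. Continuous: for all $n\ge0$, $\psi\in V$, $\boldsymbol\xi\mapsto\pi_n(\boldsymbol\xi)\psi$ is continuous $\mathfrak g^n\to\mathcal H_V$ for the norm. Weak topology on $V$: seminorms $p_{\boldsymbol\xi}(\psi)=\|\pi_n(\boldsymbol\xi)\psi\|$, $\boldsymbol\xi\in\mathfrak g^n$, $n\ge0$. Strong topology: seminorms $p_B(\psi)=\sup_{\boldsymbol\xi\in B}\|\pi_n(\boldsymbol\xi)\psi\|$, $B\subseteq\mathfrak g^n$ bounded, $n\ge0$. *)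

From HB Require Import structures.
From mathcomp Require Import all_boot all_order all_algebra.
From mathcomp Require Import all_classical all_reals all_analysis.
From mathcomp Require Import complex.

Set Implicit Arguments.
Unset Strict Implicit.
Unset Printing Implicit Defensive.

Import Order.TTheory GRing.Theory Num.Theory.
Local Open Scope classical_set_scope.
Local Open Scope ring_scope.

Section Defs.
Variable R : realType.

Section Barrelled.
Variable E : tvsType R.

Definition circled (A : set E) : Prop :=
  forall (l : R) (a : E), `|l| <= 1 -> A a -> A (l *: a).

Definition absorbing (A : set E) : Prop :=
  forall x : E, exists2 r : R, 0 < r &
    forall l : R, r <= `|l| -> exists2 a, A a & x = l *: a.

Definition barrelled : Prop :=
  forall A : set E, closed A -> convex_set A -> circled A -> absorbing A ->
    nbhs (0 : E) A.
End Barrelled.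

Definition lc_lie_bracket (g : tvsType R) (br : g -> g -> g) : Prop :=
  [/\ forall (a : R) (x y z : g), br (a *: x + y) z = a *: br x z + br y z,
      forall (a : R) (x y z : g), br x (a *: y + z) = a *: br x y + br x z,
      forall x : g, br x x = 0,
      forall x y z : g, br x (br y z) + br y (br z x) + br z (br x y) = 0
    & continuous (fun p : g * g => br p.1 p.2)].

Definition inner_product (V : lmodType R[i]) (ip : V -> V -> R[i]) : Prop :=
  [/\ forall (a : R[i]) (u v w : V), ip (a *: u + v) w = a * ip u w + ip v w,
      forall u v : V, ip u v = ((ip v u)^*)%C,
      forall u : V, 0 <= ip u u
    & forall u : V, ip u u = 0 -> u = 0].

Definition ipnorm (V : lmodType R[i]) (ip : V -> V -> R[i]) (u : V) : R :=
  Num.sqrt (complex.Re (ip u u)).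

Section Rep.
Variables (g : tvsType R) (br : g -> g -> g).
Variables (V : lmodType R[i]) (ip : V -> V -> R[i]) (pi : g -> V -> V).

Definition unitary_rep : Prop :=
  [/\ forall (x : g) (a : R[i]) (u v : V), pi x (a *: u + v) = a *: pi x u + pi x v,
      forall (a : R) (x y : g) (u : V),
        pi (a *: x + y) u = (a%:C)%C *: pi x u + pi y u,
      forall (x y : g) (u : V), pi (br x y) u = pi x (pi y u) - pi y (pi x u)
    & forall (x : g) (u v : V), ip (pi x u) v = - ip u (pi x v)].

(* pi_n (xi_n, ..., xi_1) psi = pi(xi_n) ... pi(xi_1) psi, with
   xi : 'I_n -> g and xi_{k+1} = xi k; pi_0 = identity *)
Definition pin (n : nat) (xi : {ptws 'I_n -> g}) (psi : V) : V :=
  foldr (fun i acc => pi (xi i) acc) psi (rev (enum 'I_n)).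

(* continuity of xi |-> pi_n(xi) psi from g^n (product topology) to the
   norm topology of V (i.e. of its completion H_V, restricted to V) *)
Definition continuous_rep : Prop :=
  forall (n : nat) (psi : V) (xi0 : {ptws 'I_n -> g}) (eps : R), 0 < eps ->
    \forall xi \near xi0, ipnorm ip (pin xi psi - pin xi0 psi) < eps.

Definition bounded_prod (n : nat) (B : set {ptws 'I_n -> g}) : Prop :=
  forall W : set {ptws 'I_n -> g}, nbhs ((fun _ => (0 : g)) : {ptws 'I_n -> g}) W ->
    exists2 s : R, 0 < s & forall t : R, s < t ->
      forall xi, B xi -> exists2 w, W w & forall i, xi i = t *: w i.

Definition p_weak (p : {n : nat & {ptws 'I_n -> g}}) (psi : V) : R :=
  ipnorm ip (pin (projT2 p) psi).

Definition p_strong (p : {n : nat & set {ptws 'I_n -> g}}) (psi : V) : \bar R :=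
  ereal_sup [set (ipnorm ip (pin xi psi))%:E | xi in projT2 p].

Definition weak_nbhs (psi : V) : set_system V := fun U =>
  exists (k : nat) (F : 'I_k -> {n : nat & {ptws 'I_n -> g}}),
    exists2 eps : R, 0 < eps &
      [set phi | forall j, p_weak (F j) (phi - psi) < eps] `<=` U.

Definition strong_nbhs (psi : V) : set_system V := fun U =>
  exists (k : nat) (F : 'I_k -> {n : nat & set {ptws 'I_n -> g}}),
    (forall j, bounded_prod (projT2 (F j))) /\
    exists2 eps : R, 0 < eps &
      [set phi | forall j, (p_strong (F j) (phi - psi) < eps%:E)%E] `<=` U.

End Rep.

Definition seq_cvg_in (V : Type) (N : V -> set_system V) (u : nat -> V) (l : V) :=
  forall U, N l U -> \forall k \near \oo, U (u k).

Definition seq_continuous_action (g : tvsType R) (V : Type)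
    (pi : g -> V -> V) (N : V -> set_system V) : Prop :=
  forall (xis : nat -> g) (xi : g) (psis : nat -> V) (psi : V),
    xis @ \oo --> xi -> seq_cvg_in N psis psi ->
    seq_cvg_in N (fun k => pi (xis k) (psis k)) (pi xi psi).

End Defs.

(* Split pi(xi_m) psi_m - pi(xi) psi as
     pi(xi)(psi_m - psi) + pi(xi_m - xi)(psi_m - psi) + pi(xi_m - xi) psi
   and test it against a seminorm p_eta.  The first term is p_(eta,xi)(psi_m - psi), and
   the last one tends to 0 because pi_(n+1) is continuous at (eta, 0).  For the middle
   term, the maps x |-> pi_n(eta) pi(x) (psi_m - psi) are real-linear, continuous and
   pointwise bounded (they tend to 0 pointwise), so on the barrelled space g they are
   equicontinuous: the set where all of them have norm <= 1 is a barrel.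
   For the strong topology two terms suffice: {(eta, xi_m) | eta in B} is bounded when B
   is, and pi_(n+1)(eta, xi_m - xi) psi -> 0 uniformly for eta in B, because pi_(n+1)
   is multilinear and continuous at 0. *)

Set Warnings "-notation-overridden,-notation-incompatible-prefix".
From HB Require Import structures.
From mathcomp Require Import all_boot all_order all_algebra.
From mathcomp Require Import all_classical all_reals all_analysis.
From mathcomp Require Import complex.
From mathcomp Require Import ring lra.

Set Implicit Arguments.
Unset Strict Implicit.
Unset Printing Implicit Defensive.

Import Order.TTheory GRing.Theory Num.Theory.
Local Open Scope classical_set_scope.
Local Open Scope ring_scope.

Section AffineMap.
Variables (K : pzRingType) (U : lmodType K) (W : zmodType).
Variables (s : K -> W -> W) (f : U -> W).
Hypothesis s1 : forall w, s 1 w = w.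
Hypothesis fZD : forall a u v, f (a *: u + v) = s a (f u) + f v.

Lemma affine_map0 : f 0 = 0.
Proof.
have := fZD 1 0 0; rewrite s1 scaler0 addr0 => f00.
by apply: (addrI (f 0)); rewrite addr0 -f00.
Qed.

Lemma affine_mapD u v : f (u + v) = f u + f v.
Proof. by have := fZD 1 u v; rewrite scale1r s1. Qed.

Lemma affine_mapZ a u : f (a *: u) = s a (f u).
Proof. by rewrite -[a *: u]addr0 fZD affine_map0 addr0. Qed.

Lemma affine_mapN u : f (- u) = - f u.
Proof. by apply: (addIr (f u)); rewrite -affine_mapD !addNr affine_map0. Qed.

Lemma affine_mapB u v : f (u - v) = f u - f v.
Proof. by rewrite affine_mapD affine_mapN. Qed.

End AffineMap.

Arguments affine_map0 {K U W} s {f}.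
Arguments affine_mapD {K U W} s {f}.
Arguments affine_mapZ {K U W} s {f}.
Arguments affine_mapN {K U W} s {f}.
Arguments affine_mapB {K U W} s {f}.

Definition scale_real (R : rcfType) (V : lmodType R[i]) (c : R) (v : V) : V :=
  (c%:C)%C *: v.

Lemma scale_real1 (R : rcfType) (V : lmodType R[i]) (v : V) : scale_real 1 v = v.
Proof. exact: scale1r. Qed.

Section InnerProduct.
Variables (R : realType) (V : lmodType R[i]) (ip : V -> V -> R[i]).
Hypothesis ipP : inner_product ip.

Let ipZDl w a u v : ip (a *: u + v) w = a * ip u w + ip v w.
Proof. by case: ipP. Qed.

Lemma ipC u v : ip u v = ((ip v u)^*)%C.
Proof. by case: ipP. Qed.

Lemma ipDl u v w : ip (u + v) w = ip u w + ip v w.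
Proof. exact: (affine_mapD *%R (@mul1r _) (ipZDl w)). Qed.

Lemma ipNl u w : ip (- u) w = - ip u w.
Proof. exact: (affine_mapN *%R (@mul1r _) (ipZDl w)). Qed.

Lemma ipZl a u w : ip (a *: u) w = a * ip u w.
Proof. exact: (affine_mapZ *%R (@mul1r _) (ipZDl w)). Qed.

Lemma ipDr u v w : ip u (v + w) = ip u v + ip u w.
Proof. by rewrite ipC ipDl raddfD /= -!ipC. Qed.

Lemma ipNr u w : ip u (- w) = - ip u w.
Proof. by rewrite ipC ipNl raddfN /= -ipC. Qed.

Lemma ipZr a u v : ip u (a *: v) = (a^*)%C * ip u v.
Proof. by rewrite ipC ipZl rmorphM /= -ipC. Qed.

(* Estimates are carried out on squared norms, where [sqnormD_le] replaces the
   triangle inequality. *)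
Definition sqnorm u : R := complex.Re (ip u u).

Lemma ipnorm_lt u e : 0 < e -> (ipnorm ip u < e) = (sqnorm u < e ^+ 2).
Proof.
move=> e0; rewrite /ipnorm -[X in _ < X](@gtr0_norm _ e) // -sqrtr_sqr.
by rewrite ltr_sqrt // exprn_gt0.
Qed.

Lemma sqnorm_ge0 u : 0 <= sqnorm u.
Proof. by case: ipP => _ _ /(_ u); rewrite lecE /= => /andP[]. Qed.

Lemma sqnormN u : sqnorm (- u) = sqnorm u.
Proof. by rewrite /sqnorm ipNl ipNr opprK. Qed.

Lemma Re_ip_realZ (a b : R) u v :
  complex.Re (ip ((a%:C)%C *: u) ((b%:C)%C *: v)) = a * b * complex.Re (ip u v).
Proof.
rewrite ipZl ipZr conjc_real mulrA -rmorphM.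
by case: (ip u v) => x y /=; ring.
Qed.

Lemma sqnormZ (c : R) u : sqnorm ((c%:C)%C *: u) = c ^+ 2 * sqnorm u.
Proof. by rewrite /sqnorm Re_ip_realZ expr2. Qed.

Lemma sqnormD u v : sqnorm (u + v) = sqnorm u + sqnorm v + 2 * complex.Re (ip u v).
Proof.
rewrite /sqnorm ipDl !ipDr [ip v u]ipC !raddfD /=.
by case: (ip u v) => x y /=; ring.
Qed.

Lemma Re_ip_le (t : R) u v : 0 < t ->
  2 * complex.Re (ip u v) <= t * sqnorm u + t^-1 * sqnorm v.
Proof.
move=> t0; have := sqnorm_ge0 ((t%:C)%C *: u + ((-1)%:C)%C *: v).
rewrite sqnormD !sqnormZ Re_ip_realZ sqrrN expr1n => h.
rewrite -(ler_pM2l t0).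
have -> : t * (t * sqnorm u + t^-1 * sqnorm v) = t ^+ 2 * sqnorm u + sqnorm v.
  by field; rewrite gt_eqF.
lra.
Qed.

Lemma sqnormD_le (t : R) u v : 0 < t ->
  sqnorm (u + v) <= (1 + t) * sqnorm u + (1 + t^-1) * sqnorm v.
Proof. by move=> t0; rewrite sqnormD; have := Re_ip_le u v t0; lra. Qed.

Lemma sqnormD_le2 u v : sqnorm (u + v) <= 2 * sqnorm u + 2 * sqnorm v.
Proof. by have := sqnormD_le u v ltr01; rewrite invr1. Qed.

Lemma sqnormD3_le u v w :
  sqnorm (u + v + w) <= 4 * sqnorm u + 4 * sqnorm v + 2 * sqnorm w.
Proof. by have := sqnormD_le2 (u + v) w; have := sqnormD_le2 u v; lra. Qed.

Lemma sqnorm_le_near (t : R) u v : 0 < t -> t <= 1 ->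
  sqnorm v <= 1 -> sqnorm (v - u) <= t ^+ 2 -> sqnorm u <= 1 + 3 * t.
Proof.
move=> t0 t1 v1 vu; have := sqnormD_le v (u - v) t0.
rewrite [v + _]addrC subrK -opprB sqnormN.
have t2 : (1 + t^-1) * t ^+ 2 = t ^+ 2 + t by field; rewrite gt_eqF.
have t_inv : 0 <= 1 + t^-1 by rewrite addr_ge0 // invr_ge0 ltW.
have := ler_wpM2l t_inv vu; rewrite t2.
have := ler_wpM2l (addr_ge0 ler01 (ltW t0)) v1; rewrite mulr1.
have : t ^+ 2 <= t by rewrite expr2 ler_piMl // ltW.
lra.
Qed.

Lemma sqnorm_convex (l : R) u v : 0 <= l <= 1 ->
  sqnorm ((l%:C)%C *: u + ((1 - l)%:C)%C *: v) <= l * sqnorm u + (1 - l) * sqnorm v.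
Proof.
case/andP => l0 l1; rewrite sqnormD !sqnormZ Re_ip_realZ.
have l1' : 0 <= 1 - l by rewrite subr_ge0.
have := Re_ip_le u v ltr01; rewrite invr1 !mul1r -subr_ge0 => h.
have := mulr_ge0 (mulr_ge0 l0 l1') h.
nra.
Qed.

End InnerProduct.

Section PointwiseBoxes.
Variables (I : finType) (T : uniformType) (x : T).

Lemma box_nbhs_cst (W : set T) : nbhs x W ->
  nbhs (cst x : {ptws I -> T}) [set w | forall i, W (w i)].
Proof.
move=> Wx; have := @pointwise_cvgP (discrete_topology I) T
  (nbhs (cst x : {ptws I -> T})) (cst x) (nbhs_filter _).
move=> /proj1 /(_ cvg_id) coord_cvg.
exact: (@filter_forall _ I (fun i (w : {ptws I -> T}) => W (w i)) _ _
  (fun i => coord_cvg i W Wx)).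
Qed.

Lemma nbhs_cst_box (W : set {ptws I -> T}) : nbhs (cst x : {ptws I -> T}) W ->
  exists2 W0 : set T, nbhs x W0 & forall w, (forall i, W0 (w i)) -> W w.
Proof.
move=> Wx.
pose boxes := filter_from (nbhs x) (fun W0 => [set w : {ptws I -> T} | forall i, W0 (w i)]).
have boxes_filter : Filter boxes.
  apply: filter_from_filter; first by exists setT; exact: filterT.
  move=> A B A0 B0; exists (A `&` B); first exact: filterI.
  by move=> w ABw; split => i; case: (ABw i).
have /(_ W Wx) [W0 W0x W0W] : boxes --> (cst x : {ptws I -> T}).
  apply/(@pointwise_cvgP (discrete_topology I) T _ _ boxes_filter) => i A Ax.
  by exists A => // w; apply.
by exists W0 => // w W0w; exact: W0W.
Qed.

End PointwiseBoxes.

Definition ptws_cons (T : Type) n (z : T) (eta : 'I_n -> T) : {ptws 'I_n.+1 -> T} :=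
  fun i => if unlift ord0 i is Some j then eta j else z.

Lemma ptws_cons_cst (T : Type) n (z : T) : ptws_cons z (cst z : 'I_n -> T) = cst z.
Proof. by apply/funext => i; rewrite /ptws_cons; case: unlift. Qed.

Lemma ptws_cons_continuous (T : uniformType) n (eta : 'I_n -> T) :
  continuous (fun z : T => ptws_cons z eta).
Proof.
move=> z; apply/(@pointwise_cvgP (discrete_topology 'I_n.+1) T _ _
  (fmap_filter _ (nbhs_filter z))) => i A Ai.
change (nbhs z [set y | A (ptws_cons y eta i)]).
move: Ai; rewrite /ptws_cons; case: (unlift ord0 i) => [j|] Ai //.
by apply: nearW => y; exact: nbhs_singleton Ai.
Qed.

Section TopologicalVectorSpace.
Variables (R : numFieldType) (E : tvsType R).

Lemma cvg_subr0 (I : Type) (F : set_system I) {FF : Filter F} (u : I -> E) l :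
  u @ F --> l -> (fun i => u i - l) @ F --> 0.
Proof.
move=> ul A A0; apply: (@filterS _ F FF _ _ _ (ul _ (nbhsT l A0))) => i [a Aa /= <-].
by rewrite addrC addKr.
Qed.

Lemma cvg0Z (I : Type) (F : set_system I) {FF : Filter F} (u : I -> E) (c : R) :
  u @ F --> 0 -> (fun i => c *: u i) @ F --> 0.
Proof.
have [-> _|c0 u0] := eqVneq c 0.
  rewrite (_ : (fun i => 0 *: u i) = cst 0); first exact: cvg_cst.
  by apply/funext => i; rewrite scale0r.
move=> A A0; apply: (@filterS _ F FF _ _ _ (u0 _ (nbhs0Z (invr_neq0 c0) A0))).
move=> i [a Aa /= ua].
by rewrite -ua scalerA divff // scale1r.
Qed.

Lemma cvg_seq_scale_nbhs0 (u : nat -> E) (l : E) (W : set E) :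
  u @ \oo --> l -> nbhs 0 W -> \forall c \near (0 : R^o), forall m, W (c *: u m).
Proof.
move=> ul W0.
have scale_near (y : E) : exists2 A : set R^o, nbhs 0 A &
    exists2 B, nbhs y B & forall c z, A c -> B z -> W (c *: z).
  have := @scale_continuous R E (0, y) W; rewrite /= scale0r.
  move=> /(_ W0) [[A B] /= [A0 By] AB].
  by exists A => //; exists B => // c z Ac Bz; exact: (AB (c, z)).
have [A A0 [B Bl AB]] := scale_near l.
have [N _ uN] := ul _ Bl.
have head_terms : \forall c \near (0 : R^o), forall i : 'I_N, W (c *: u i).
  apply: (@filter_forall _ 'I_N (fun i (c : R^o) => W (c *: u i)) (nbhs 0) _) => i.
  have [A' A'0 [B' B'u A'B']] := scale_near (u i).
  by apply: filterS A'0 => c A'c; apply: A'B' => //; exact: nbhs_singleton.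
apply: filterS2 head_terms A0 => c Whead Ac m.
have [mN|Nm] := ltnP m N; first exact: (Whead (Ordinal mN)).
by apply: AB => //; exact: uN.
Qed.

End TopologicalVectorSpace.

Lemma bounded_prod_cons (R : realType) (E : tvsType R) n
    (B : set {ptws 'I_n -> E}) (u : nat -> E) (l : E) :
  bounded_prod B -> u @ \oo --> l ->
  bounded_prod [set ptws_cons (u m) eta | m in [set: nat] & eta in B].
Proof.
move=> Bb ul W W0.
have [W1 W10 W1W] := nbhs_cst_box W0.
have [s s0 Bs] := Bb _ (box_nbhs_cst 'I_n W10).
have /nbhs_norm0P [e e0 ue] := cvg_seq_scale_nbhs0 ul W10.
exists (Num.max s e^-1); first by rewrite lt_max s0.
move=> t; rewrite gt_max => /andP[st et] _ [m _ [eta Beta <-]].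
have t0 : 0 < t := lt_trans s0 st.
have [w Ww etaw] := Bs t st eta Beta.
exists (ptws_cons (t^-1 *: u m) w).
  apply: W1W => i; rewrite /ptws_cons; case: (unlift ord0 i) => [j|]; first exact: Ww.
  apply: ue => /=; rewrite ger0_norm ?invr_ge0 ?ltW // -(invrK e).
  by rewrite ltf_pV2 ?posrE ?invr_gt0.
move=> i; rewrite /ptws_cons; case: (unlift ord0 i) => [j|] //.
by rewrite scalerA divff ?gt_eqF // scale1r.
Qed.

Section UniformBoundedness.
Variables (R : realType) (E : tvsType R) (V : lmodType R[i]) (ip : V -> V -> R[i]).
Hypothesis ipP : inner_product ip.
Hypothesis E_barrelled : barrelled E.
Variables (I : Type) (T : I -> E -> V).
Hypothesis T_ZD : forall i (c : R) x y, T i (c *: x + y) = (c%:C)%C *: T i x + T i y.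
Hypothesis T_cont0 : forall i e, 0 < e -> \forall x \near 0, sqnorm ip (T i x) < e.
Hypothesis T_ptws_bounded : forall x, has_ubound (range (fun i => sqnorm ip (T i x))).

Let TD i x y : T i (x + y) = T i x + T i y.
Proof. exact: (affine_mapD (@scale_real R V) (@scale_real1 R V) (T_ZD i)). Qed.

Let TB i x y : T i (x - y) = T i x - T i y.
Proof. exact: (affine_mapB (@scale_real R V) (@scale_real1 R V) (T_ZD i)). Qed.

Let TZ i c x : T i (c *: x) = (c%:C)%C *: T i x.
Proof. exact: (affine_mapZ (@scale_real R V) (@scale_real1 R V) (T_ZD i)). Qed.

Let ball1 := [set x | forall i, sqnorm ip (T i x) <= 1].

Let ball1_closed : closed ball1.
Proof.
move=> x clx i; apply/ler_addgt0Pr => e e0.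
pose t := Num.min 1 (e / 3).
have t0 : 0 < t by rewrite lt_min ltr01 divr_gt0.
have t1 : t <= 1 by rewrite ge_min lexx.
have te : t <= e / 3 by rewrite ge_min lexx orbT.
have near_x : \forall y \near x, sqnorm ip (T i y - T i x) < t ^+ 2.
  apply: filterS (nbhsT x (T_cont0 i (exprn_gt0 2 t0))) => _ [z Tz <-].
  by rewrite -TB /= addrC addKr.
have [y [y1 xy]] := clx _ near_x.
have := sqnorm_le_near ipP t0 t1 (y1 i) (ltW xy).
lra.
Qed.

Let ball1_convex : convex_set ball1.
Proof.
move=> x y l; rewrite !inE => x1 y1 i.
change (sqnorm ip (T i (l%:num *: x + (1 - l%:num) *: y)) <= 1).
have l01 : 0 <= l%:num <= 1 by apply/andP.
rewrite TD !TZ; apply: le_trans (sqnorm_convex ipP _ _ l01) _.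
by have := x1 i; have := y1 i; nra.
Qed.

Let ball1_circled : circled ball1.
Proof.
move=> l x l1 x1 i; rewrite TZ sqnormZ //.
have l2 : l ^+ 2 <= 1 by rewrite -real_normK ?num_real // exprn_ile1.
by have := x1 i; have := sqnorm_ge0 ipP (T i x); nra.
Qed.

Let ball1_absorbing : absorbing ball1.
Proof.
move=> x; have [M Mub] := T_ptws_bounded x.
exists (`|M| + 1); first by rewrite ltr_pwDr.
move=> l Ml; have l0 : 0 < `|l| by apply: lt_le_trans Ml; rewrite ltr_pwDr.
exists (l^-1 *: x); last by rewrite scalerA divff ?scale1r // -normr_gt0.
move=> i; rewrite TZ sqnormZ // exprVn ler_pdivrMl ?mulr1; last first.
  by rewrite -real_normK ?num_real // exprn_gt0.
have Ti : sqnorm ip (T i x) <= M by apply: Mub; exists i.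
rewrite -real_normK ?num_real //.
by have := ler_norm M; nra.
Qed.

Lemma barrelled_equicontinuous : nbhs 0 [set x | forall i, sqnorm ip (T i x) <= 1].
Proof.
exact: E_barrelled ball1_closed ball1_convex ball1_circled ball1_absorbing.
Qed.

Lemma equicontinuous_cvg0 (F : set_system I) {FF : Filter F} (d : I -> E) :
  d @ F --> 0 -> forall e, 0 < e -> \forall i \near F, sqnorm ip (T i (d i)) < e.
Proof.
move=> d0 e e0; pose c := Num.sqrt (e / 2).
have e20 : 0 < e / 2 by rewrite divr_gt0.
have c0 : 0 < c by rewrite sqrtr_gt0.
apply: (@filterS _ F FF _ _ _ (cvg0Z c^-1 d0 barrelled_equicontinuous)) => i di.
have -> : d i = c *: (c^-1 *: d i) by rewrite scalerA divff ?gt_eqF // scale1r.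
rewrite TZ sqnormZ // sqr_sqrtr ?ltW //.
by have := di i; have := sqnorm_ge0 ipP (T i (c^-1 *: d i)); nra.
Qed.

End UniformBoundedness.

Lemma eventually_bounded_has_ubound (R : realType) (s : nat -> R) (M : R) :
  (\forall m \near \oo, s m <= M) -> has_ubound (range s).
Proof.
move=> [N _ sM]; exists (\big[Num.max/M]_(k < N) s k) => _ [m _ <-].
have [mN|Nm] := ltnP m N; first exact: (le_bigmax M (fun k : 'I_N => s k) (Ordinal mN)).
exact: le_trans (sM _ Nm) (bigmax_ge_id _ _ _ _).
Qed.

Section Representation.
Variables (R : realType) (g : tvsType R) (V : lmodType R[i]).
Variables (ip : V -> V -> R[i]) (pi : g -> V -> V).
Hypothesis ipP : inner_product ip.
Hypothesis pi_ZDv : forall x (a : R[i]) u v, pi x (a *: u + v) = a *: pi x u + pi x v.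
Hypothesis pi_ZDg : forall (a : R) x y u, pi (a *: x + y) u = (a%:C)%C *: pi x u + pi y u.
Hypothesis pi_cont : continuous_rep ip pi.

Let piDv x u v : pi x (u + v) = pi x u + pi x v.
Proof. exact: (affine_mapD *:%R (@scale1r _ V) (pi_ZDv x)). Qed.

Let piBv x u v : pi x (u - v) = pi x u - pi x v.
Proof. exact: (affine_mapB *:%R (@scale1r _ V) (pi_ZDv x)). Qed.

Let piZv x a u : pi x (a *: u) = a *: pi x u.
Proof. exact: (affine_mapZ *:%R (@scale1r _ V) (pi_ZDv x)). Qed.

(* [pi_ZDg] with the map [pi^~ u] exposed, so that it can be inferred. *)
Let pi_ZDg_at u a x y : (pi^~ u) (a *: x + y) = (a%:C)%C *: (pi^~ u) x + (pi^~ u) y.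
Proof. exact: pi_ZDg. Qed.

Let pi0g u : pi 0 u = 0.
Proof.
exact: (affine_map0 (@scale_real R V) (@scale_real1 R V) (pi_ZDg_at u)).
Qed.

Let piBg x y u : pi (x - y) u = pi x u - pi y u.
Proof. exact: (affine_mapB (@scale_real R V) (@scale_real1 R V) (pi_ZDg_at u)). Qed.

Let piZg a x u : pi (a *: x) u = (a%:C)%C *: pi x u.
Proof. exact: (affine_mapZ (@scale_real R V) (@scale_real1 R V) (pi_ZDg_at u)). Qed.

Lemma pinZD n (xi : {ptws 'I_n -> g}) a u v :
  pin pi xi (a *: u + v) = a *: pin pi xi u + pin pi xi v.
Proof. by rewrite /pin; elim: (rev _) => //= i s ->; exact: pi_ZDv. Qed.

Let pin0 n (xi : {ptws 'I_n -> g}) : pin pi xi 0 = 0.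
Proof. exact: (affine_map0 *:%R (@scale1r _ V) (pinZD xi)). Qed.

Let pinD n (xi : {ptws 'I_n -> g}) u v : pin pi xi (u + v) = pin pi xi u + pin pi xi v.
Proof. exact: (affine_mapD *:%R (@scale1r _ V) (pinZD xi)). Qed.

Let pinZ n (xi : {ptws 'I_n -> g}) a u : pin pi xi (a *: u) = a *: pin pi xi u.
Proof. exact: (affine_mapZ *:%R (@scale1r _ V) (pinZD xi)). Qed.

Lemma pin_cons n z (eta : {ptws 'I_n -> g}) psi :
  pin pi (ptws_cons z eta) psi = pin pi eta (pi z psi).
Proof.
rewrite /pin enum_ordSl rev_cons foldr_rcons /= /ptws_cons unlift_none -map_rev foldr_map.
by elim: (rev _) => //= i s ->; rewrite liftK.
Qed.

Lemma pin_scale n (w : {ptws 'I_n -> g}) (t : R) psi :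
  pin pi (fun i => t *: w i) psi = ((t ^+ n)%:C)%C *: pin pi w psi.
Proof.
suff fold_scale s : foldr (fun i acc => pi (t *: w i) acc) psi s =
    ((t ^+ size s)%:C)%C *: foldr (fun i acc => pi (w i) acc) psi s.
  by rewrite /pin fold_scale size_rev size_enum_ord.
elim: s => [|i s IH] /=; first by rewrite expr0 scale1r.
by rewrite IH piZg piZv scalerA -rmorphM exprS.
Qed.

Lemma pi_sub_decomp3 (x xm : g) (u um : V) :
  pi xm um - pi x u = pi x (um - u) + pi (xm - x) (um - u) + pi (xm - x) u.
Proof.
rewrite -addrA -piDv subrK piBg piBv.
by rewrite [RHS]addrC addrA subrK.
Qed.

Lemma pi_sub_decomp2 (x xm : g) (u um : V) :
  pi xm um - pi x u = pi xm (um - u) + pi (xm - x) u.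
Proof. by rewrite piBv piBg addrA subrK. Qed.

Lemma pin_sqnorm_near n psi (xi0 : {ptws 'I_n -> g}) e : 0 < e ->
  \forall xi \near xi0, sqnorm ip (pin pi xi psi - pin pi xi0 psi) < e.
Proof.
move=> e0; have sqrt_e0 : 0 < Num.sqrt e by rewrite sqrtr_gt0.
have := pi_cont psi xi0 sqrt_e0.
by apply: filterS => xi; rewrite ipnorm_lt // sqr_sqrtr // ltW.
Qed.

Lemma pin_cons_sqnorm_near0 n (eta : {ptws 'I_n -> g}) psi e : 0 < e ->
  \forall x \near (0 : g), sqnorm ip (pin pi eta (pi x psi)) < e.
Proof.
move=> e0; apply: (@filterS _ (nbhs (0 : g)) _ _ _ _ (@ptws_cons_continuous g n eta 0 _
  (pin_sqnorm_near psi (ptws_cons 0 eta) e0))) => x /=.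
by rewrite !pin_cons pi0g pin0 subr0.
Qed.

Lemma pin_cons_bounded_cvg0 n (B : set {ptws 'I_n -> g}) psi (d : nat -> g) e :
  bounded_prod B -> d @ \oo --> 0 -> 0 < e ->
  \forall m \near \oo, forall eta, B eta -> sqnorm ip (pin pi eta (pi (d m) psi)) < e.
Proof.
move=> Bb d0 e0.
have [W0 W00 W0e] := nbhs_cst_box (pin_sqnorm_near psi (cst 0 : {ptws 'I_n.+1 -> g}) e0).
have pin_cst0 : pin pi (cst 0 : {ptws 'I_n.+1 -> g}) psi = 0.
  by rewrite -ptws_cons_cst pin_cons pi0g pin0.
have [s s0 Bs] := Bb _ (box_nbhs_cst 'I_n W00).
have st : s < s + 1 by rewrite ltrDl.
have t0 : 0 < s + 1 := lt_trans s0 st.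
apply: (@filterS _ eventually _ _ _ _ (cvg0Z ((s + 1) ^+ n) d0 W00)) => m dm eta Beta.
have [w Ww etaw] := Bs _ st eta Beta.
(* With eta = (s + 1) w and w small, multilinearity moves (s + 1)^n onto d m. *)
rewrite (_ : eta = fun i => (s + 1) *: w i); last exact/funext.
rewrite pin_scale -pinZ -piZg -pin_cons.
have := W0e (ptws_cons ((s + 1) ^+ n *: d m) w); rewrite pin_cst0 subr0; apply.
by move=> i; rewrite /ptws_cons; case: (unlift ord0 i) => [j|] //; exact: Ww.
Qed.

Lemma pin_barrelled_cvg0 n (eta : {ptws 'I_n -> g}) (phi : nat -> V) (d : nat -> g) :
  barrelled g ->
  (forall x e, 0 < e -> \forall m \near \oo, sqnorm ip (pin pi eta (pi x (phi m))) < e) ->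
  d @ \oo --> 0 -> forall e, 0 < e ->
  \forall m \near \oo, sqnorm ip (pin pi eta (pi (d m) (phi m))) < e.
Proof.
move=> g_barrelled phi_small.
apply: (equicontinuous_cvg0 ipP g_barrelled (T := fun m x => pin pi eta (pi x (phi m)))).
- by move=> m c x y; rewrite pi_ZDg pinZD.
- by move=> m e; exact: pin_cons_sqnorm_near0.
- move=> x; apply: (@eventually_bounded_has_ubound _ _ 1).
  by apply: filterS (phi_small x 1 ltr01) => m /ltW.
Qed.

Lemma seq_cvg_weakP (u : nat -> V) l :
  seq_cvg_in (weak_nbhs ip pi) u l <->
  forall n (eta : {ptws 'I_n -> g}) e, 0 < e ->
    \forall m \near \oo, sqnorm ip (pin pi eta (u m - l)) < e.
Proof.
split=> [ul n eta e e0 | ul U [k [F [eps eps0 FU]]]].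
  apply: (ul [set phi | sqnorm ip (pin pi eta (phi - l)) < e]).
  have sqrt_e0 : 0 < Num.sqrt e by rewrite sqrtr_gt0.
  exists 1%N, (fun _ => existT _ n eta), (Num.sqrt e) => // phi /(_ ord0).
  by rewrite /p_weak /= ipnorm_lt // sqr_sqrtr // ltW.
have : \forall m \near \oo, forall j, p_weak ip pi (F j) (u m - l) < eps.
  apply: filter_forall => j; case: (F j) => n eta.
  apply: (@filterS _ eventually _ _ _ _ (ul n eta _ (exprn_gt0 2 eps0))) => m.
  by rewrite /p_weak /= ipnorm_lt.
by apply: filterS => m /FU.
Qed.

Lemma seq_cvg_strongP (u : nat -> V) l :
  seq_cvg_in (strong_nbhs ip pi) u l <->
  forall n (B : set {ptws 'I_n -> g}), bounded_prod B -> forall e, 0 < e ->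
    \forall m \near \oo, forall eta, B eta -> sqnorm ip (pin pi eta (u m - l)) < e.
Proof.
split=> [ul n B Bb e e0 | ul U [k [F [Fb [eps eps0 FU]]]]].
  apply: (ul [set phi | forall eta, B eta -> sqnorm ip (pin pi eta (phi - l)) < e]).
  have sqrt_e0 : 0 < Num.sqrt e by rewrite sqrtr_gt0.
  exists 1%N, (fun _ => existT _ n B); split => //.
  exists (Num.sqrt e) => // phi /(_ ord0) Bphi eta Beta.
  rewrite -(sqr_sqrtr (ltW e0)) -ipnorm_lt // -lte_fin.
  by apply: le_lt_trans Bphi; apply: ereal_sup_ubound; exists eta.
have : \forall m \near \oo, forall j, (p_strong ip pi (F j) (u m - l) < eps%:E)%E.
  apply: filter_forall => j; move: (Fb j); case: (F j) => n B /= Bb.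
  have eps2 : 0 < eps / 2 by rewrite divr_gt0.
  apply: (@filterS _ eventually _ _ _ _ (ul n B Bb _ (exprn_gt0 2 eps2))) => m Bm.
  apply: (@le_lt_trans _ _ (eps / 2)%:E); last by rewrite lte_fin; lra.
  apply: ge_ereal_sup => _ [eta Beta <-]; rewrite lee_fin ltW //.
  by rewrite ipnorm_lt // Bm.
by apply: filterS => m /FU.
Qed.

Lemma weak_seq_continuous : barrelled g -> seq_continuous_action pi (weak_nbhs ip pi).
Proof.
move=> g_barrelled xis xi psis psi xi_cvg /seq_cvg_weakP psi_cvg.
apply/seq_cvg_weakP => n eta e e0.
have e10 : 0 < e / 10 by rewrite divr_gt0.
have psi_small x e' : 0 < e' ->
    \forall m \near \oo, sqnorm ip (pin pi eta (pi x (psis m - psi))) < e'.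
  move=> e'0; apply: (@filterS _ eventually _ _ _ _ (psi_cvg _ (ptws_cons x eta) _ e'0)) => m.
  by rewrite pin_cons.
have d0 : (fun m => xis m - xi) @ \oo --> 0 by exact: cvg_subr0.
have first_term := psi_small xi _ e10.
have middle_term := pin_barrelled_cvg0 g_barrelled psi_small d0 e10.
have last_term : \forall m \near \oo, sqnorm ip (pin pi eta (pi (xis m - xi) psi)) < e / 10.
  exact: (d0 _ (pin_cons_sqnorm_near0 eta psi e10)).
apply: (filterS3 _ _ first_term middle_term last_term) => m h1 h2 h3.
rewrite pi_sub_decomp3 !pinD.
by have := sqnormD3_le ipP (pin pi eta (pi xi (psis m - psi)))
  (pin pi eta (pi (xis m - xi) (psis m - psi))) (pin pi eta (pi (xis m - xi) psi)); lra.
Qed.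

Lemma strong_seq_continuous : seq_continuous_action pi (strong_nbhs ip pi).
Proof.
move=> xis xi psis psi xi_cvg /seq_cvg_strongP psi_cvg.
apply/seq_cvg_strongP => n B Bb e e0.
have e40 : 0 < e / 4 by rewrite divr_gt0.
have first_term := psi_cvg _ _ (bounded_prod_cons Bb xi_cvg) _ e40.
have d0 : (fun m => xis m - xi) @ \oo --> 0 by exact: cvg_subr0.
have last_term := pin_cons_bounded_cvg0 psi Bb d0 e40.
apply: (filterS2 _ _ first_term last_term) => m h1 h2 eta Beta.
rewrite pi_sub_decomp2 pinD.
have h1' : sqnorm ip (pin pi eta (pi (xis m) (psis m - psi))) < e / 4.
  by rewrite -pin_cons; apply: h1; exists m => //; exists eta.
have := sqnormD_le2 ipP (pin pi eta (pi (xis m) (psis m - psi)))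
  (pin pi eta (pi (xis m - xi) psi)).
by have := h2 eta Beta; lra.
Qed.

End Representation.

Theorem lemma3p14 (R : realType) (g : tvsType R) (br : g -> g -> g)
    (V : lmodType R[i]) (ip : V -> V -> R[i]) (pi : g -> V -> V) :
  barrelled g -> lc_lie_bracket br -> inner_product ip ->
  unitary_rep br ip pi -> continuous_rep ip pi ->
  seq_continuous_action pi (weak_nbhs ip pi) /\
  seq_continuous_action pi (strong_nbhs ip pi).
Proof.
move=> g_barrelled _ ipP [pi_ZDv pi_ZDg _ _] pi_cont; split.
- exact: weak_seq_continuous ipP pi_ZDv pi_ZDg pi_cont g_barrelled.
- exact: strong_seq_continuous ipP pi_ZDv pi_ZDg pi_cont.
Qed.
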